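(* Let $(X,d^\star)$ be a $\star$-metric space and $\{x_n\}$ a Cauchy sequence in $(X,d^\star)$. If $\{x_n\}$ has an accumulation point $x_0\in X$, then $\{x_n\}$ converges to $x_0$ under $d^\star$, i.e. for every $\epsilon>0$ there is $k$ with $d^\star(x_0,x_n)<\epsilon$ for all $n\ge k$.
   Context: A $t$-definer is a function $\star:[0,\infty)\times[0,\infty)\to[0,\infty)$ such that for all $a,b,c\ge 0$: $a\star b=b\star a$; $a\star(b\star c)=(a\star b)\star c$; if $a\le b$ then $a\star c\le b\star c$; $a\star 0=a$; and $\star$ is continuous in its first variable with respect to the Euclidean topology. Given a nonempty set $X$ and a $t$-definer $\star$, a $\star$-metric on $X$ is a function $d^\star:X\times X\to[0,\infty)$ such that for all $x,y,z\in X$: $d^\star(x,y)=0$ iff $x=y$; $d^\star(x,y)=d^\star(y,x)$; and $d^\star(x,y)\le d^\star(x,z)\star d^\star(z,y)$. A sequence $\{x_n\}$ is Cauchy if for every $\epsilon>0$ there is $k\in\mathbb{N}$ with $d^\star(x_n,x_m)<\epsilon$ for all $m,n\ge k$. An accumulation point of the sequence $\{x_n\}$ is a point $x_0$ such that for every $\epsilon>0$ there are infinitely many $n$ with $d^\star(x_0,x_n)<\epsilon$ (equivalently, every neighborhood of $x_0$ in the topology induced by $d^\star$ contains $x_n$ for infinitely many $n$). *)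

(* concrete reals R. [0,oo) is modelled as the subset {a : R | 0 <= a};
   a t-definer is a function R -> R -> R whose axioms are required on [0,oo). *)
From Stdlib Require Import Reals.
Open Scope R_scope.

Definition t_definer (star : R -> R -> R) : Prop :=
  (forall a b, 0 <= a -> 0 <= b -> 0 <= star a b) /\
  (forall a b, 0 <= a -> 0 <= b -> star a b = star b a) /\
  (forall a b c, 0 <= a -> 0 <= b -> 0 <= c ->
      star a (star b c) = star (star a b) c) /\
  (forall a b c, 0 <= a -> 0 <= b -> 0 <= c -> a <= b -> star a c <= star b c) /\
  (forall a, 0 <= a -> star a 0 = a) /\
  (forall c, 0 <= c -> forall a, 0 <= a ->
     forall eps, 0 < eps -> exists delta, 0 < delta /\
       forall b, 0 <= b -> Rabs (b - a) < delta ->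
         Rabs (star b c - star a c) < eps).

Definition star_metric {X : Type} (star : R -> R -> R) (d : X -> X -> R) : Prop :=
  (forall x y, 0 <= d x y) /\
  (forall x y, d x y = 0 <-> x = y) /\
  (forall x y, d x y = d y x) /\
  (forall x y z, d x y <= star (d x z) (d z y)).

Definition star_cauchy {X : Type} (d : X -> X -> R) (x : nat -> X) : Prop :=
  forall eps, 0 < eps -> exists k : nat,
    forall m n, (k <= m)%nat -> (k <= n)%nat -> d (x n) (x m) < eps.

Definition accumulation_point {X : Type} (d : X -> X -> R) (x : nat -> X) (x0 : X) : Prop :=
  forall eps, 0 < eps -> forall N : nat, exists n, (N <= n)%nat /\ d x0 (x n) < eps.

Definition star_converges {X : Type} (d : X -> X -> R) (x : nat -> X) (x0 : X) : Prop :=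
  forall eps, 0 < eps -> exists k : nat, forall n, (k <= n)%nat -> d x0 (x n) < eps.

(* Write * for star, fix eps and put c = eps/2.  Continuity of * in its first
   variable at 0, together with 0 * c = c, gives a delta with a * c < c + c
   whenever 0 <= a < delta.  Choose k from the Cauchy property for c and, since
   x0 is an accumulation point, some m >= k with d(x0, x_m) < delta.  For n >= k
   the triangle inequality through x_m and monotonicity of * give
   d(x0, x_n) <= d(x0, x_m) * d(x_m, x_n) <= d(x0, x_m) * c < eps. *)
From Stdlib Require Import Reals Lra.
Open Scope R_scope.

Section TDefiner.

Variable star : R -> R -> R.
Hypothesis star_t_definer : t_definer star.

Lemma star_0l (c : R) : 0 <= c -> star 0 c = c.
Proof.
  destruct star_t_definer as [_ [Hcom [_ [_ [H0 _]]]]].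
  intros Hc. rewrite Hcom by lra. now apply H0.
Qed.

Lemma star_monotone_r (a b c : R) :
  0 <= a -> 0 <= b -> 0 <= c -> b <= c -> star a b <= star a c.
Proof.
  destruct star_t_definer as [_ [Hcom [_ [Hmon _]]]].
  intros Ha Hb Hc Hbc.
  rewrite (Hcom a b), (Hcom a c) by assumption.
  now apply Hmon.
Qed.

Lemma star_near_0l (c eps : R) : 0 <= c -> 0 < eps ->
  exists delta, 0 < delta /\ forall a, 0 <= a -> a < delta -> star a c < c + eps.
Proof.
  destruct star_t_definer as [_ [_ [_ [_ [_ Hcont]]]]].
  intros Hc Heps.
  destruct (Hcont c Hc 0 (Rle_refl 0) eps Heps) as [delta [Hdelta Hnear]].
  exists delta. split; [assumption|].
  intros a Ha Ha_lt.
  assert (Hdist : Rabs (star a c - star 0 c) < eps).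
  { apply Hnear; [assumption|]. rewrite Rminus_0_r, Rabs_right by lra. assumption. }
  rewrite star_0l in Hdist by assumption.
  apply Rabs_def2 in Hdist. lra.
Qed.

End TDefiner.

Theorem proposition4p4 (X : Type) (star : R -> R -> R) (d : X -> X -> R)
  (x : nat -> X) (x0 : X) :
  t_definer star -> star_metric star d -> star_cauchy d x ->
  accumulation_point d x x0 -> star_converges d x x0.
Proof.
  intros Hstar [d_nonneg [_ [_ d_triangle]]] Hcauchy Hacc eps Heps.
  set (c := eps / 2).
  assert (Hc : 0 < c) by (unfold c; lra).
  destruct (Hcauchy c Hc) as [k Hk].
  destruct (star_near_0l star Hstar c c (Rlt_le _ _ Hc) Hc) as [delta [Hdelta Hnear]].
  destruct (Hacc delta Hdelta k) as [m [Hkm Hm]].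
  exists k. intros n Hkn.
  assert (Hmn : d (x m) (x n) < c) by now apply Hk.
  assert (Hbound : star (d x0 (x m)) (d (x m) (x n)) <= star (d x0 (x m)) c)
    by (apply star_monotone_r; auto; lra).
  pose proof (d_triangle x0 (x n) (x m)).
  pose proof (Hnear (d x0 (x m)) (d_nonneg _ _) Hm).
  unfold c in *. lra.
Qed.
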